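(* Let $\delta_1=1/32$, $\delta_2=1/4$, and $$U=\{(x,y,0): 1-\delta_1<x\leq 1,\ -\delta_2<y<\delta_2\},\quad V=\{(x,y,0): -1\leq x<-1+\delta_1,\ -\delta_2<y<\delta_2\},$$ $$W=\{(x,y,z): -\delta_2<x<\delta_2,\ 1-\delta_1<y\leq 1,\ 0\leq z<\delta_2\}.$$ Let $A=(0,-1,0)$, let $S^1=\{(x,y,0):x^2+y^2=1\}$ and $S^2_{\geq 0}=\{(x,y,z):x^2+y^2+z^2=1,\ z\geq 0\}$. Then for any $B\in U\cap S^1$, $C\in V\cap S^1$, $D\in W\cap S^2_{\geq 0}$, $$AB+BC+CA+DA+DB+DC\leq 4+4\sqrt{2},$$ where $PQ$ denotes the Euclidean distance between $P$ and $Q$. *)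

From Stdlib Require Import Reals.
Open Scope R_scope.

Definition pt := (R * R * R)%type.

Definition dist3 (P Q : pt) : R :=
  let '(x1, y1, z1) := P in let '(x2, y2, z2) := Q in
  sqrt ((x1 - x2)^2 + (y1 - y2)^2 + (z1 - z2)^2).

Definition delta1 : R := 1/32.
Definition delta2 : R := 1/4.

Definition inU (P : pt) : Prop :=
  let '(x, y, z) := P in 1 - delta1 < x <= 1 /\ - delta2 < y < delta2 /\ z = 0.
Definition inV (P : pt) : Prop :=
  let '(x, y, z) := P in -1 <= x < -1 + delta1 /\ - delta2 < y < delta2 /\ z = 0.
Definition inW (P : pt) : Prop :=
  let '(x, y, z) := P in - delta2 < x < delta2 /\ 1 - delta1 < y <= 1 /\ 0 <= z < delta2.

Definition inS1 (P : pt) : Prop :=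
  let '(x, y, z) := P in x^2 + y^2 = 1 /\ z = 0.
Definition inS2plus (P : pt) : Prop :=
  let '(x, y, z) := P in x^2 + y^2 + z^2 = 1 /\ 0 <= z.

Definition ptA : pt := (0, -1, 0).

(** All six points lie on the unit sphere, so each distance is
    [sqrt (2 - 2 P.Q)].  The segments [AB], [AC], [DB], [DC] are close to
    quarter circles and are bounded by [sqrt 2 * (1 + t/2 - t^2/10)] with
    [t = - P.Q], using [sqrt (1 + t) <= 1 + t/2 - t^2/10] on [[-1/2, 1/2]];
    [BC] and [DA] are close to diameters and are bounded by the tangent line
    of [sqrt] at [4].  Summing, the bound exceeds [4 + 4 sqrt 2] by
    [sqrt 2 * E - (1 + B.C)/2 - (1 - d2)/2] for an explicit quadratic [E], and
    [E <= (1 - d2)/4] because on the unit circle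
    [(b1 + c1)(b1 - c1) = -(b2 + c2)(b2 - c2)] forces the horizontal defect
    [b1 + c1] of the nearly antipodal pair to be small against [b2 + c2]. *)
From Stdlib Require Import Reals Lra Psatz.
Open Scope R_scope.

Definition dot3 (P Q : pt) : R :=
  let '(x1, y1, z1) := P in let '(x2, y2, z2) := Q in x1 * x2 + y1 * y2 + z1 * z2.

Lemma dist3_unit (P Q : pt) :
  dot3 P P = 1 -> dot3 Q Q = 1 -> dist3 P Q = sqrt (2 - 2 * dot3 P Q).
Proof.
  destruct P as [[x1 y1] z1], Q as [[x2 y2] z2]; simpl; intros hP hQ.
  f_equal; nra.
Qed.

Lemma dot3_unit_bounds (P Q : pt) :
  dot3 P P = 1 -> dot3 Q Q = 1 -> -1 <= dot3 P Q <= 1.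
Proof.
  destruct P as [[x1 y1] z1], Q as [[x2 y2] z2]; simpl; intros hP hQ.
  pose proof (pow2_ge_0 (x1 - x2)). pose proof (pow2_ge_0 (y1 - y2)).
  pose proof (pow2_ge_0 (z1 - z2)). pose proof (pow2_ge_0 (x1 + x2)).
  pose proof (pow2_ge_0 (y1 + y2)). pose proof (pow2_ge_0 (z1 + z2)).
  nra.
Qed.

Lemma sqrt_le_of_le_sq (x y : R) : 0 <= y -> x <= y ^ 2 -> sqrt x <= y.
Proof.
  intros hy hx. rewrite <- (sqrt_pow2 y hy). now apply sqrt_le_1_alt.
Qed.

Lemma sqrt_le_tangent (a x : R) :
  0 < a -> 0 <= x -> sqrt x <= (a ^ 2 + x) / (2 * a).
Proof.
  intros ha hx.
  apply Rmult_le_reg_r with (2 * a); [lra |].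
  unfold Rdiv; rewrite Rmult_assoc, Rinv_l, Rmult_1_r by lra.
  pose proof (pow2_sqrt x hx). pose proof (pow2_ge_0 (sqrt x - a)). nra.
Qed.

Lemma sqrt_1_add_le (t : R) :
  -1/2 <= t <= 1/2 -> sqrt (1 + t) <= 1 + t / 2 - t ^ 2 / 10.
Proof.
  intros ht. apply sqrt_le_of_le_sq; [nra |].
  (* [(1 + t/2 - t^2/10)^2 - (1 + t) = t^2 (1/20 - t/10 + t^2/100)] *)
  assert (0 <= t ^ 2 * (1/20 - t/10 + t ^ 2 / 100)) by (apply Rmult_le_pos; nra).
  nra.
Qed.

Lemma dist3_le_chord (P Q : pt) :
  dot3 P P = 1 -> dot3 Q Q = 1 -> dist3 P Q <= (3 - dot3 P Q) / 2.
Proof.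
  intros hP hQ. rewrite dist3_unit by assumption.
  pose proof (dot3_unit_bounds P Q hP hQ).
  eapply Rle_trans; [apply (sqrt_le_tangent 2); lra | lra].
Qed.

Lemma dist3_le_near_orthogonal (P Q : pt) :
  dot3 P P = 1 -> dot3 Q Q = 1 -> -1/2 <= dot3 P Q <= 1/2 ->
  dist3 P Q <= sqrt 2 * (1 - dot3 P Q / 2 - dot3 P Q ^ 2 / 10).
Proof.
  intros hP hQ hPQ. rewrite dist3_unit by assumption.
  replace (2 - 2 * dot3 P Q) with (2 * (1 + - dot3 P Q)) by ring.
  rewrite sqrt_mult_alt by lra.
  apply Rmult_le_compat_l; [apply sqrt_pos |].
  eapply Rle_trans; [apply sqrt_1_add_le; lra | apply Req_le; field].
Qed.

Lemma unit_circle_sum_sq_le (b1 b2 c1 c2 : R) :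
  b1 ^ 2 + b2 ^ 2 = 1 -> c1 ^ 2 + c2 ^ 2 = 1 ->
  31/16 < b1 - c1 -> -1/2 < b2 - c2 < 1/2 ->
  (b1 + c1) ^ 2 <= (b2 + c2) ^ 2 / 15.
Proof.
  intros hb hc hx hy.
  assert (hprod : (b1 + c1) ^ 2 * (b1 - c1) ^ 2 = (b2 + c2) ^ 2 * (b2 - c2) ^ 2).
  { rewrite <- !Rpow_mult_distr.
    replace ((b1 + c1) * (b1 - c1)) with (- ((b2 + c2) * (b2 - c2))) by nra.
    ring. }
  assert (15/4 <= (b1 - c1) ^ 2) by nra.
  assert ((b2 - c2) ^ 2 <= 1/4) by nra.
  pose proof (pow2_ge_0 (b1 + c1)). pose proof (pow2_ge_0 (b2 + c2)).
  nra.
Qed.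

Lemma quadratic_excess_le (b1 b2 c1 c2 d1 d2 : R) :
  b1 ^ 2 + b2 ^ 2 = 1 -> c1 ^ 2 + c2 ^ 2 = 1 -> 31/32 < b1 -> c1 < -31/32 ->
  -1/4 < b2 < 1/4 -> -1/4 < c2 < 1/4 -> d1 ^ 2 + d2 ^ 2 <= 1 ->
  ((1 - d2) * (b2 + c2) - d1 * (b1 + c1)) / 2
    - (b2 ^ 2 + c2 ^ 2 + (d1 * b1 + d2 * b2) ^ 2 + (d1 * c1 + d2 * c2) ^ 2) / 10
  <= (1 - d2) / 4.
Proof.
  intros hb hc hb1 hc1 hb2 hc2 hd.
  assert (hs : (b1 + c1) ^ 2 <= (b2 + c2) ^ 2 / 15)
    by (apply unit_circle_sum_sq_le; lra).
  assert (hx : 15/4 * d1 ^ 2 <= (d1 * (b1 - c1)) ^ 2).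
  { rewrite Rpow_mult_distr.
    assert (15/4 <= (b1 - c1) ^ 2) by nra. pose proof (pow2_ge_0 d1). nra. }
  assert (hy : (d2 * (b2 - c2)) ^ 2 <= (b2 - c2) ^ 2).
  { rewrite Rpow_mult_distr.
    assert (d2 ^ 2 <= 1) by nra. pose proof (pow2_ge_0 (b2 - c2)). nra. }
  assert (hdiff : (d1 * b1 + d2 * b2) - (d1 * c1 + d2 * c2)
                  = d1 * (b1 - c1) + d2 * (b2 - c2)) by ring.
  set (p := d1 * b1 + d2 * b2) in *. set (q := d1 * c1 + d2 * c2) in *.
  set (x := d1 * (b1 - c1)) in *. set (y := d2 * (b2 - c2)) in *.
  assert (hpq : x ^ 2 / 4 - y ^ 2 / 2 <= p ^ 2 + q ^ 2).
  { pose proof (pow2_ge_0 (p + q)). pose proof (pow2_ge_0 (x + 2 * y)).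
    assert (hsq : (p - q) ^ 2 = (x + y) ^ 2) by now rewrite hdiff.
    lra. }
  (* the AM-GM weight is chosen so that [hs] absorbs the [(b1 + c1)^2] term
     and [hx] the [d1^2] term *)
  assert (hamgm : - d1 * (b1 + c1) <= 3/2 * (b1 + c1) ^ 2 + d1 ^ 2 / 6)
    by (pose proof (pow2_ge_0 (d1 / 3 + (b1 + c1))); lra).
  assert (d2 <= 1) by nra.
  assert ((1 - d2) * (b2 + c2) <= (1 - d2) / 2) by nra.
  pose proof (pow2_ge_0 d1).
  lra.
Qed.

Theorem theorem2 (B C D : pt) :
  inU B -> inS1 B -> inV C -> inS1 C -> inW D -> inS2plus D ->
  dist3 ptA B + dist3 B C + dist3 C ptA + dist3 D ptA + dist3 D B + dist3 D C
    <= 4 + 4 * sqrt 2.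
Proof.
  destruct B as [[b1 b2] b3], C as [[c1 c2] c3], D as [[d1 d2] d3].
  unfold inU, inV, inW, inS1, inS2plus, delta1, delta2.
  intros (hb1 & hb2 & _) (hB & ->) (hc1 & hc2 & _) (hC & ->) (hd1 & hd2 & _) (hD & _).
  assert (uA : dot3 ptA ptA = 1) by (simpl; ring).
  assert (uB : dot3 (b1, b2, 0) (b1, b2, 0) = 1) by (simpl; nra).
  assert (uC : dot3 (c1, c2, 0) (c1, c2, 0) = 1) by (simpl; nra).
  assert (uD : dot3 (d1, d2, d3) (d1, d2, d3) = 1) by (simpl; nra).
  pose proof (dist3_le_chord _ _ uB uC) as hBC.
  pose proof (dist3_le_chord _ _ uD uA) as hDA.
  pose proof (dot3_unit_bounds _ _ uB uC) as hBCdot.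
  pose proof (dist3_le_near_orthogonal _ _ uA uB ltac:(simpl; lra)) as hAB.
  pose proof (dist3_le_near_orthogonal _ _ uC uA ltac:(simpl; lra)) as hCA.
  assert (hd : d1 ^ 2 + d2 ^ 2 <= 1) by nra.
  pose proof (dist3_le_near_orthogonal _ _ uD uB ltac:(simpl; split; nra)) as hDB.
  pose proof (dist3_le_near_orthogonal _ _ uD uC ltac:(simpl; split; nra)) as hDC.
  pose proof (quadratic_excess_le b1 b2 c1 c2 d1 d2 hB hC
                ltac:(lra) ltac:(lra) ltac:(lra) ltac:(lra) hd) as hE.
  simpl dot3 in *.
  pose proof (Rmult_le_compat_l (sqrt 2) _ _ (sqrt_pos 2) hE).
  assert (sqrt 2 * (1 - d2) <= 2 * (1 - d2)).
  { apply Rmult_le_compat_r; [nra |].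
    apply sqrt_le_of_le_sq; lra. }
  lra.
Qed.
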